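(* Let $Y$ be a sofic shift and $(G,L_G)$ a right-resolving and regular labeled graph presenting $Y$. Then there is a labeled-graph homomorphism $\theta : (G,L_G) \to (\mathbb K(Y), L_{\mathbb K(Y)})$ such that the induced sliding block code satisfies $\theta(\mathcal R(L_G)) \subseteq \mathcal R(L_{\mathbb K(Y)})$. If $(G,L_G)$ is also follower-separated, then $\theta : G \to \mathbb K(Y)$ is injective.
   Context: A labeled graph $(G,L_G)$: finite directed graph (vertices $V_G$, edges $E_G$, source/terminal maps $s_G,t_G$) without sinks or sources, labeling $L_G:E_G\to A$, edge shift $X_G$; $L_G$ acts coordinatewise; presents $Y=L_G(X_G)$. Right-resolving: distinct edges with the same source have distinct labels. $f_G(v)=\{L_G(x): x$ a right-infinite path starting at $v\}$. For $y\in Y$, $F(y)=\{w\in Y[0,\infty): y_{(-\infty,-1]}w\in Y\}$ with $Y[0,\infty)=\{y_{[0,\infty)}:y\in Y\}$. A vertex $v$ is regular if there is $z\in X_G$ whose edge $z_{-1}$ ends at $v$ and $f_G(v)=F(L_G(z))$; the graph is regular if all vertices are. Follower-separated: $f_G(v)=f_G(w)\Rightarrow v=w$. For a sliding block code $\pi:X\to Y$, $\mathbb U(x)=\{z\in X:\exists N\ \forall i\le N,\ z_i=x_i\}$; $x$ is regular for $\pi$ if $\pi$ maps $\mathbb U(x)$ onto $\mathbb U(\pi(x))$; $\mathcal R(\pi)$ is the set of such points. Future cover $(\mathbb K(Y),L_{\mathbb K(Y)})$: vertices the distinct sets $F(y)$, $y\in Y$, and an edge labeled $a$ from $F(y)$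 to $F(z)$ exactly when $F(z)=\{w\in A^{\mathbb N}: aw\in F(y)\}$ (one edge per such pair and label). A labeled-graph homomorphism is a graph homomorphism preserving labels; it induces a sliding block code on edge shifts. *)

(* bi-infinite sequences are functions int -> _,
   right-infinite sequences are functions nat -> _, sets are Prop predicates. *)
From mathcomp Require Import all_boot all_order all_algebra.
Set Implicit Arguments. Unset Strict Implicit. Unset Printing Implicit Defensive.
Import GRing.Theory Num.Theory.
Local Open Scope ring_scope.

Section Shifts.
Variables (V E A : Type) (s t : E -> V) (L : E -> A).

Definition edge_shift (x : int -> E) : Prop := forall i : int, t (x i) = s (x (i + 1)).

Definition presented (y : int -> A) : Prop :=
  exists x, edge_shift x /\ y = (fun i => L (x i)).

Definition rpath (x : nat -> E) : Prop := forall n : nat, t (x n) = s (x n.+1).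

Definition follower (v : V) (w : nat -> A) : Prop :=
  exists x, rpath x /\ s (x 0%N) = v /\ w = (fun n => L (x n)).

Definition right_resolving : Prop :=
  forall e e' : E, s e = s e' -> L e = L e' -> e = e'.

Definition follower_separated : Prop :=
  forall v w : V, (forall u, follower v u <-> follower w u) -> v = w.
End Shifts.

Section Futures.
Variables (A : Type) (Y : (int -> A) -> Prop).

Definition rays (w : nat -> A) : Prop := exists y, Y y /\ w = (fun n => y (Posz n)).

Definition concat (y : int -> A) (w : nat -> A) : int -> A :=
  fun i => match i with Posz n => w n | Negz _ => y i end.

Definition future (y : int -> A) (w : nat -> A) : Prop := rays w /\ Y (concat y w).

Definition ncons (a : A) (w : nat -> A) : nat -> A :=
  fun n => match n with 0%N => a | m.+1 => w m end.

(* vertices of the future cover K(Y): the distinct sets F(y), y in Y *)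
Definition KV : Type := {S : (nat -> A) -> Prop | exists y, Y y /\ S = future y}.

(* edges of K(Y): one edge labeled a from S to S' when S' = {w | a w in S} *)
Record KE : Type := MkKE {
  Ksrc : KV; Klab : A; Ktgt : KV;
  Kedge : forall w, proj1_sig Ktgt w <-> proj1_sig Ksrc (ncons Klab w) }.
End Futures.

Definition regular_vertex (V E A : Type) (s t : E -> V) (L : E -> A) (v : V) : Prop :=
  exists z, edge_shift s t z /\ t (z (-1)) = v /\
    (forall w, follower s t L v w <-> future (presented s t L) (fun i => L (z i)) w).

Definition regular_graph (V E A : Type) (s t : E -> V) (L : E -> A) : Prop :=
  forall v, regular_vertex s t L v.

Definition Uset (T : Type) (X : (int -> T) -> Prop) (x z : int -> T) : Prop :=
  X z /\ exists N : int, forall i : int, i <= N -> z i = x i.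

Definition regular_point (T U : Type) (X : (int -> T) -> Prop) (Y : (int -> U) -> Prop)
  (pi : (int -> T) -> (int -> U)) (x : int -> T) : Prop :=
  forall y, Uset Y (pi x) y <-> exists z, Uset X x z /\ pi z = y.

Definition lab_code (E A : Type) (L : E -> A) (x : int -> E) : int -> A := fun i => L (x i).

Definition lab_hom (V E A : Type) (s t : E -> V) (L : E -> A) (Y : (int -> A) -> Prop)
  (thV : V -> KV Y) (thE : E -> KE Y) : Prop :=
  forall e, Ksrc (thE e) = thV (s e) /\ Ktgt (thE e) = thV (t e) /\ Klab (thE e) = L e.

(* A vertex v of G is sent to its follower set f_G(v), which regularity makes a
   vertex F(y) of K(Y); an edge e is sent to the edge of K(Y) labeled L_G(e) from
   f_G(s e) to f_G(t e), which exists because right-resolvability gives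
   f_G(t e) = {w | L_G(e) w ∈ f_G(s e)}.  For a point x regular for L_G, a point
   of U(L_G(x)) presented by K(Y) lies in Y, so it lifts to some z ∈ U(x), and
   θ(z) is the required preimage in U(θ(x)).  That the labels of K(Y)-paths lie
   in Y is a compactness argument: every central window of such a label sequence
   occurs in Y, and Y, presented by a finite graph, is closed (König's lemma).
   Injectivity is follower-separation plus right-resolvability. *)
From Pilot Require Import Defs.
From mathcomp Require Import all_boot all_order all_algebra zify.
From Stdlib Require Import Classical ClassicalEpsilon FunctionalExtensionality PropExtensionality.
Set Implicit Arguments. Unset Strict Implicit. Unset Printing Implicit Defensive.
Import GRing.Theory.
Local Open Scope ring_scope.

Section Compactness.
Variable T : finType.

Lemma finite_monotone_witness (P : T -> nat -> Prop) :
  (forall v n m, (m <= n)%N -> P v n -> P v m) ->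
  (forall n, exists v, P v n) -> exists v, forall n, P v n.
Proof.
move=> mono H; apply: NNPP => /not_ex_all_not noP.
have [N HN] : exists N, forall v, v \in enum T -> ~ P v N.
  elim: (enum T) => [|a l [N HN]]; first by exists 0%N.
  have [na Hna] := not_all_ex_not _ _ (noP a).
  exists (maxn N na) => v /predU1P [-> | vl] Pv.
  - by apply: Hna; apply: mono Pv; rewrite leq_maxr.
  - by apply: (HN v vl); apply: mono Pv; rewrite leq_maxl.
by have [v Pv] := H N; apply: (HN v) Pv; rewrite mem_enum.
Qed.

Definition extendable (R : nat -> T -> T -> Prop) (k : nat) (a : T) : Prop :=
  forall n, exists c : nat -> T,
    c 0%N = a /\ forall j, (j < n)%N -> R (k + j)%N (c j) (c j.+1).

Lemma extendable_step (R : nat -> T -> T -> Prop) k a :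
  extendable R k a -> exists b, R k a b /\ extendable R k.+1 b.
Proof.
move=> ext.
have [b Hb] : exists b, forall n, R k a b /\ exists c : nat -> T,
    c 0%N = b /\ forall j, (j < n)%N -> R (k.+1 + j)%N (c j) (c j.+1).
  apply: finite_monotone_witness.
    move=> v n m mn [Rv [c [c0 Hc]]]; split => //; exists c; split => // j jm.
    by apply: Hc; apply: leq_trans mn.
  move=> n; have [c [c0 Hc]] := ext n.+1.
  exists (c 1%N); split; first by have := Hc 0%N erefl; rewrite addn0 c0.
  exists (fun j => c j.+1); split => // j jn.
  by have := Hc j.+1 jn; rewrite addSnnS.
by exists b; split=> [|n]; [case: (Hb 0%N) | case: (Hb n)].
Qed.

Lemma konig (R : nat -> T -> T -> Prop) (a : T) :
  extendable R 0 a -> exists c : nat -> T, c 0%N = a /\ forall k, R k (c k) (c k.+1).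
Proof.
move=> ext0.
have step k b : exists b', extendable R k b -> R k b b' /\ extendable R k.+1 b'.
  case: (classic (extendable R k b)) => [ext|]; last by exists b.
  by have [b' ?] := extendable_step ext; exists b'.
have [f Hf] : exists f : nat -> T -> T, forall k b,
    extendable R k b -> R k b (f k b) /\ extendable R k.+1 (f k b).
  exists (fun k b => proj1_sig (constructive_indefinite_description _ (step k b))).
  by move=> k b; exact: proj2_sig (constructive_indefinite_description _ (step k b)).
pose c := fix c n := if n is m.+1 then f m (c m) else a.
have ext_c k : extendable R k (c k) by elim: k => [|k IH] //; exact: (Hf k _ IH).2.
by exists c; split => // k; exact: (Hf k _ (ext_c k)).1.
Qed.

End Compactness.

Definition glue (T : Type) (r l : nat -> T) (i : int) : T :=
  match i with Posz n => r n | Negz n => l n.+1 end.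

Section PresentedShift.
Variables (A V E : finType) (s t : E -> V) (L : E -> A).

Lemma edge_shift_translate (p : int -> E) (k : int) :
  edge_shift s t p -> edge_shift s t (fun i => p (i + k)).
Proof. by move=> ep i; rewrite -addrAC; apply: ep. Qed.

Lemma presented_of_windows (y : int -> A) :
  (forall n : nat, exists p, edge_shift s t p /\
     forall i : int, - (n%:Z) <= i <= n%:Z -> L (p i) = y i) -> presented s t L y.
Proof.
move=> H.
have [e0 He0] : exists e0, forall n : nat, exists p, edge_shift s t p /\ p 0 = e0 /\
     forall i : int, - (n%:Z) <= i <= n%:Z -> L (p i) = y i.
  apply: finite_monotone_witness; last first.
    by move=> n; have [p [ep Hp]] := H n; exists (p 0), p.
  move=> v n m mn [p [ep [p0 Hp]]]; exists p; do 2!split => //.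
  by move=> i Hi; apply: Hp; lia.
(* c k pairs the edges at positions k and -k of the path being built *)
pose R k (a b : E * E) := [/\ t a.1 = s b.1, L b.1 = y (k.+1)%:Z,
                              t b.2 = s a.2 & L b.2 = y (- (k.+1)%:Z)].
have [c [c0 Hc]] : exists c, c 0%N = (e0, e0) /\ forall k, R k (c k) (c k.+1).
  apply: konig => n; have [p [ep [p0 Hp]]] := He0 n.
  exists (fun j : nat => (p j%:Z, p (- j%:Z))); rewrite oppr0 p0; split => // k kn.
  split; rewrite /= ?Hp //; try lia.
  - by rewrite (ep k%:Z); congr (s (p _)); lia.
  - by rewrite (ep (- (k.+1)%:Z)); congr (s (p _)); lia.
exists (glue (fun n => (c n).1) (fun n => (c n).2)); split.
  case=> [n|[|n]] /=.
  - by have [-> _ _ _] := Hc n; congr (s (c _).1); lia.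
  - by have [_ _ -> _] := Hc 0%N; rewrite c0.
  - by have [_ _ -> _] := Hc n.+1; rewrite subn1.
apply: functional_extensionality => -[[|n]|n] /=.
- by have [p [_ [p0 Hp]]] := He0 0%N; rewrite c0 -p0 Hp.
- by have [_ -> _ _] := Hc n.
- by have [_ _ _ ->] := Hc n; rewrite NegzE.
Qed.

End PresentedShift.

Section FutureCover.
Variables (A : Type) (Y : (int -> A) -> Prop).

Lemma KV_inhabited (S : KV Y) : exists w, proj1_sig S w.
Proof.
case: S => S [u [Yu HS]]; rewrite /= HS; exists (fun n => u (Posz n)); split; first by exists u.
by have -> : concat u (fun n : nat => u (Posz n)) = u by apply: functional_extensionality => -[].
Qed.

Definition splice (m : nat) (u w : nat -> A) (j : nat) : A :=
  if (j < m)%N then u j else w (j - m)%N.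

Lemma splice0 u w : splice 0 u w = w.
Proof. by apply: functional_extensionality => j; rewrite /splice subn0. Qed.

Lemma splice_ncons m u w : splice m u (Defs.ncons (u m) w) = splice m.+1 u w.
Proof.
apply: functional_extensionality => j; rewrite /splice.
case: (ltngtP j m) => [jm | mj | ->]; last by rewrite ltnSn subnn.
- by rewrite ltnS ltnW.
- by rewrite ltnNge mj -(subnSK mj).
Qed.

Lemma Kpath_splice (w : int -> KE Y) (a : int) (m : nat) (om : nat -> A) :
  edge_shift (@Ksrc A Y) (@Ktgt A Y) w ->
  proj1_sig (Ksrc (w (a + m%:Z))) om ->
  proj1_sig (Ksrc (w a)) (splice m (fun j => Klab (w (a + j%:Z))) om).
Proof.
move=> ew; elim: m om => [|m IH] om.
  by rewrite addr0 splice0.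
move=> Hom; rewrite -splice_ncons; apply: IH; apply/(Kedge (w (a + m%:Z))).
by rewrite (ew (a + m%:Z)) -addrA -PoszD addn1.
Qed.

End FutureCover.

Section Theta.
Variables (A V E : finType) (s t : E -> V) (L : E -> A).
Local Notation Y := (presented s t L).

Lemma Kpath_label_presented (w : int -> KE Y) :
  edge_shift (@Ksrc A Y) (@Ktgt A Y) w -> Y (lab_code (@Klab A Y) w).
Proof.
move=> ew; apply: presented_of_windows => n.
pose a := - n%:Z.
have [om Hom] := KV_inhabited (Ksrc (w (a + (n.*2.+1)%:Z))).
have := Kpath_splice ew Hom.
case: (Ksrc (w a)) => S [u [Yu HS]]; rewrite /= HS => -[[_ [[q [eq ->]] Hq]] _].
exists (fun i => q (i - a)); split; first exact: edge_shift_translate.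
move=> i Hi; have [k Hk] : exists k : nat, i - a = k%:Z by exists (absz (i - a)); lia.
rewrite Hk -(congr1 (fun f => f k) Hq) /splice /lab_code.
have -> : (k < n.*2.+1)%N by lia.
by congr (Klab (w _)); lia.
Qed.

Lemma follower_future (v : V) : regular_vertex s t L v ->
  exists y, Y y /\ follower s t L v = future Y y.
Proof.
move=> [z [ez [_ Hz]]]; exists (lab_code L z); split; first by exists z.
by apply: functional_extensionality => w; apply: propositional_extensionality.
Qed.

Lemma follower_tgt (e : E) : right_resolving s L ->
  forall w, follower s t L (t e) w <-> follower s t L (s e) (Defs.ncons (L e) w).
Proof.
move=> Hrr w; split.
  move=> [x [px [x0 ->]]].
  exists (fun n => if n is m.+1 then x m else e); split; last split => //.
    by case=> [|m] //=; rewrite x0.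
  by apply: functional_extensionality => -[].
move=> [x [px [x0 Hw]]].
have xe : x 0%N = e by apply: Hrr => //; have := congr1 (fun f => f 0%N) Hw.
exists (fun n => x n.+1); split => //; split; first by rewrite -(px 0%N) xe.
by apply: functional_extensionality => n; have := congr1 (fun f => f n.+1) Hw.
Qed.

Hypotheses (Hrr : right_resolving s L) (Hreg : regular_graph s t L).

Definition thetaV (v : V) : KV Y := exist _ (follower s t L v) (follower_future (Hreg v)).

Definition thetaE (e : E) : KE Y :=
  @MkKE A Y (thetaV (s e)) (L e) (thetaV (t e)) (follower_tgt e Hrr).

Lemma theta_lab_hom : lab_hom s t L thetaV thetaE.
Proof. by []. Qed.

Lemma theta_regular_point (x : int -> E) :
  regular_point (edge_shift s t) Y (lab_code L) x ->
  regular_point (edge_shift (@Ksrc A Y) (@Ktgt A Y)) (presented (@Ksrc A Y) (@Ktgt A Y) (@Klab A Y))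
    (lab_code (@Klab A Y)) (fun i => thetaE (x i)).
Proof.
move=> Hx y; split.
  move=> [[w [ew ->]] [N HN]].
  have [z [[ez [N' HN']] Hz]] : exists z, Uset (edge_shift s t) x z /\
      lab_code L z = lab_code (@Klab A Y) w.
    by apply/Hx; split; [exact: Kpath_label_presented | exists N].
  exists (fun i => thetaE (z i)); split => //; split; last first.
    by exists N' => i Hi; rewrite HN'.
  by move=> i; rewrite /= ez.
move=> [z [[ez [N HN]] <-]]; split; first by exists z.
by exists N => i Hi; rewrite /lab_code HN.
Qed.

Lemma thetaV_inj : follower_separated s t L -> injective thetaV.
Proof.
move=> Hsep v v' /(congr1 (@proj1_sig _ _)) /= Hf.
by apply: Hsep => u; rewrite Hf.
Qed.

Lemma thetaE_inj : follower_separated s t L -> injective thetaE.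
Proof.
move=> Hsep e e' Hee'; apply: Hrr; last by have := congr1 (@Klab A Y) Hee'.
by apply: thetaV_inj => //; have := congr1 (@Ksrc A Y) Hee'.
Qed.

End Theta.

Theorem lemma2p18 (A V E : finType) (s t : E -> V) (L : E -> A)
  (no_sink : forall v : V, exists e : E, s e = v)
  (no_source : forall v : V, exists e : E, t e = v)
  (Hrr : right_resolving s L)
  (Hreg : regular_graph s t L) :
  exists (thV : V -> KV (presented s t L)) (thE : E -> KE (presented s t L)),
    lab_hom s t L thV thE /\
    (forall x : int -> E, edge_shift s t x ->
       regular_point (edge_shift s t) (presented s t L) (lab_code L) x ->
       regular_point (edge_shift (@Ksrc A (presented s t L)) (@Ktgt A (presented s t L)))
         (presented (@Ksrc A (presented s t L)) (@Ktgt A (presented s t L)) (@Klab A (presented s t L)))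
         (lab_code (@Klab A (presented s t L))) (fun i => thE (x i))) /\
    (follower_separated s t L -> injective thV /\ injective thE).
Proof.
exists (thetaV Hreg), (thetaE Hrr Hreg); split; first exact: theta_lab_hom.
split; first by move=> x _; exact: theta_regular_point.
by move=> Hsep; split; [exact: thetaV_inj | exact: thetaE_inj].
Qed.
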